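(* Let $P$ and $Q$ be autarkic tuples. Then $P\subseteq Q$, or $Q\subseteq P$, or $P\cap Q=\emptyset$.
   Context: Steiner Forest: finite undirected graph $G=(V,E)$, non-negative edge costs $(c_e)_{e\in E}$, set $\mathcal{D}$ of demand pairs $\{a,b\}\subseteq V$ (partners). For $U\subseteq V$, $\delta(U)$ is the set of edges with exactly one endpoint in $U$; $U$ separates $S$ if $S\cap U\ne\emptyset$ and $S\setminus U\ne\emptyset$; $\mathrm{sep}(U)$ is the set of demand pairs separated by $U$. The $\varepsilon$-extended moat-growing algorithm (fixed $\varepsilon\ge0$): time $t$ increases continuously from $0$ at unit rate; it maintains tight edges $F$ (initially empty), duals $y_S(t)\ge0$ (initially $0$), and budgets of components (initially $0$). $\mathcal{C}^t$ is the family of vertex sets of connected components of $(V,F)$. A component is demand-active if it contains a vertex not connected in $(V,F)$ to some partner; budget-active if not demand-active but with positive budget; active if either; $\mathcal{A}^t$ is the set of active components. Each $y_S$, $S\in\mathcal{A}^t$, grows at unit rate; budgets of demand-active components grow at rate $\varepsilon$ and of budget-active ones decrease at rate $1$; an edge $e$ with $\sum_{S:e\in\delta(S)}y_S(t)=c_e$ becomes tight and is added to $F$; merging components add budgets. $y_S=y_S(\infty)$. Autarkic pair: $\{A,B\}$ with $A,B\in\mathrm{supp}(y)$ disjoint, both in $\mathcal{A}^t$ for some $t$, $\mathrm{sep}(A)=\mathrm{sep}(B)\ne\emptyset$. Autarkic triple: $\{A_1,A_2,A_3\}$ pairwise disjoint, all in $\mathcal{A}^t$ for some $t$, each $\mathrm{sep}(A_i)\ne\emptyset$,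 $\mathrm{sep}(A_1\cup A_2\cup A_3)=\emptyset$. Autarkic tuples are autarkic pairs and triples. For autarkic tuples $P$ (with sets $A_i$) and $Q$ (with sets $B_j$), $P\subseteq Q$ means every $A_i$ is contained in some $B_j$, and $P\cap Q=\emptyset$ means $A_i\cap B_j=\emptyset$ for all $i,j$. *)

From HB Require Import structures.
From mathcomp Require Import all_boot all_order all_algebra.
From mathcomp Require Import reals.
Set Implicit Arguments. Unset Strict Implicit. Unset Printing Implicit Defensive.
Import Order.TTheory GRing.Theory Num.Theory.
Local Open Scope ring_scope.

Section MoatGrowing.
(* An instance of Steiner Forest:
   - V : finite vertex set, E : finite edge set, ends e = endpoints of e
     (an undirected (multi)graph; the orientation of the pair is irrelevant),
   - c : non-negative edge costs,
   - D : demand pairs; an ordered pair (a,b) in D represents the demand pair {a,b},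
   - eps : the parameter of the eps-extended moat-growing algorithm. *)
Variables (R : realType) (V E : finType) (ends : E -> V * V) (c : E -> R)
          (D : {set V * V}) (eps : R).

Definition in_delta (U : {set V}) (e : E) : bool :=
  ((ends e).1 \in U) != ((ends e).2 \in U).

Definition separates (U : {set V}) (d : V * V) : bool :=
  ((d.1 \in U) || (d.2 \in U)) && ((d.1 \notin U) || (d.2 \notin U)).

Definition sep (U : {set V}) : {set V * V} := [set d in D | separates U d].

Definition adjF (F : {set E}) : rel V :=
  fun u w => [exists e in F, (ends e == (u, w)) || (ends e == (w, u))].

Definition comp (F : {set E}) (v : V) : {set V} := [set u | connect (adjF F) v u].

Definition comps (F : {set E}) : {set {set V}} := [set comp F v | v : V].

Definition partners (u v : V) : bool := ((u, v) \in D) || ((v, u) \in D).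

Definition demand_active (F : {set E}) (C : {set V}) : bool :=
  [exists v in C, exists u, partners v u && ~~ connect (adjF F) v u].

Definition dact (F : {set E}) : {set {set V}} :=
  [set C in comps F | demand_active F C].

(* A run of the algorithm is described by breakpoints
     0 = tm 0 < tm 1 < ... < tm k
   and, for each phase i <= k, the (constant on [tm i, tm (i+1))) set Fs i of
   tight edges and the set As i of active components.  Phase k lasts forever
   (there are no active components any more). *)

Definition yat (tm : nat -> R) (As : nat -> {set {set V}}) (i : nat) (S : {set V}) : R :=
  \sum_(j < i) (tm j.+1 - tm j) * (S \in As j)%:R.

Definition load (tm : nat -> R) (As : nat -> {set {set V}}) (i : nat) (e : E) : R :=
  \sum_(S : {set V}) yat tm As i S * (in_delta S e)%:R.

(* budget of the component C at time tm i: the budgets of all earlier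
   components S contained in C have been added into C by merging; each
   such S gained eps per unit of time while demand-active and lost 1 per
   unit of time while budget-active. *)
Definition budget (tm : nat -> R) (Fs : nat -> {set E}) (As : nat -> {set {set V}}) (i : nat) (C : {set V}) : R :=
  \sum_(S : {set V} | S \subset C)
    \sum_(j < i) (tm j.+1 - tm j) *
       (eps * (S \in dact (Fs j))%:R - ((S \in As j) && (S \notin dact (Fs j)))%:R).

Definition is_run (k : nat) (tm : nat -> R) (Fs : nat -> {set E})
  (As : nat -> {set {set V}}) : Prop :=
  [/\ tm 0 = 0,
      (forall i, (i <= k)%N -> Fs i = [set e | c e <= load tm As i e]),
      (forall i, (i <= k)%N ->
         As i = dact (Fs i) :|:
                [set C in comps (Fs i) | (C \notin dact (Fs i)) &&
                                        (0 < budget tm Fs As i C)]),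
      (* no event strictly inside a phase *)
      (forall i, (i < k)%N ->
         [/\ tm i < tm i.+1,
             (forall e, e \notin Fs i -> load tm As i.+1 e <= c e) &
             (forall C, C \in As i -> C \notin dact (Fs i) ->
                tm i.+1 - tm i <= budget tm Fs As i C)]) &
      As k = set0].

Definition yfin (k : nat) (tm : nat -> R) (As : nat -> {set {set V}}) (S : {set V}) : R := yat tm As k S.

Definition suppy (k : nat) (tm : nat -> R) (As : nat -> {set {set V}}) : {set {set V}} := [set S | 0 < yfin k tm As S].

Definition active_at (k : nat) (tm : nat -> R) (As : nat -> {set {set V}}) (t : R) : {set {set V}} :=
  [set S | [exists i : 'I_k, (tm i <= t < tm i.+1) && (S \in As i)]].

(* autarkic tuples, represented by the set of their member sets *)
Definition autarkic_pair (k : nat) (tm : nat -> R) (As : nat -> {set {set V}}) (P : {set {set V}}) : Prop :=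
  exists A B : {set V},
    [/\ P = [set A; B], (A \in suppy k tm As) && (B \in suppy k tm As),
        [disjoint A & B],
        (exists t, (A \in active_at k tm As t) && (B \in active_at k tm As t)) &
        (sep A = sep B /\ sep A != set0)].

Definition autarkic_triple (k : nat) (tm : nat -> R) (As : nat -> {set {set V}}) (P : {set {set V}}) : Prop :=
  exists A1 A2 A3 : {set V},
    [/\ P = [set A1; A2; A3],
        [&& [disjoint A1 & A2], [disjoint A1 & A3] & [disjoint A2 & A3]],
        (exists t, [&& A1 \in active_at k tm As t, A2 \in active_at k tm As t
                     & A3 \in active_at k tm As t]),
        [&& sep A1 != set0, sep A2 != set0 & sep A3 != set0] &
        sep (A1 :|: A2 :|: A3) = set0].

Definition autarkic (k : nat) (tm : nat -> R) (As : nat -> {set {set V}}) (P : {set {set V}}) : Prop :=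
  autarkic_pair k tm As P \/ autarkic_triple k tm As P.

End MoatGrowing.

Definition tuple_sub (V : finType) (P Q : {set {set V}}) : Prop :=
  forall A, A \in P -> exists2 B, B \in Q & A \subset B.

Definition tuple_disj (V : finType) (P Q : {set {set V}}) : Prop :=
  forall A B, A \in P -> B \in Q -> [disjoint A & B].

From Pilot Require Import Defs.
From mathcomp Require Import all_boot all_order all_algebra.
From mathcomp Require Import reals.
Set Implicit Arguments. Unset Strict Implicit. Unset Printing Implicit Defensive.
Import Order.TTheory GRing.Theory Num.Theory.
Local Open Scope ring_scope.

(* Moats are connected components of a forest that only grows, so sets active
   at times t <= t' are nested or disjoint.  An autarkic tuple is a family of at
   most three disjoint sets, each separating a demand pair, whose union separates
   none; hence a set that is nested or disjoint with every member, contains one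
   member and avoids another, separates a demand pair.  If P is active no later
   than Q, each member of P lies in a member of Q or misses the union of Q; if
   both cases occurred, that union would split P and separate a demand pair,
   which is impossible for an autarkic Q. *)

Section Separation.
Variables (V : finType) (D : {set V * V}).

Lemma separatesE (U : {set V}) (d : V * V) :
  separates U d = ((d.1 \in U) != (d.2 \in U)).
Proof. by rewrite /separates; case: (d.1 \in U); case: (d.2 \in U). Qed.

Lemma sepC (U : {set V}) : sep D (~: U) = sep D U.
Proof.
by apply/setP => d; rewrite !inE !separatesE !inE; case: (_ \in U); case: (_ \in U).
Qed.

Lemma sep0 : sep D set0 = set0.
Proof. by apply/setP => d; rewrite !inE separatesE !inE andbF. Qed.

Lemma separatesU (A B : {set V}) (d : V * V) : [disjoint A & B] ->
  separates (A :|: B) d = separates A d (+) separates B d.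
Proof.
move=> dAB; have notAB x : (x \in A) ==> (x \notin B).
  by apply/implyP => /(disjointFr dAB) ->.
rewrite !separatesE !inE; move: (notAB d.1) (notAB d.2).
by case: (d.1 \in A); case: (d.2 \in A); case: (d.1 \in B); case: (d.2 \in B).
Qed.

Lemma separates_across (X Y Z : {set V}) (d : V * V) :
  Y \subset X -> [disjoint Z & X] -> separates Y d -> separates Z d -> separates X d.
Proof.
move=> sYX dZX; have inX x : (x \in Y) ==> (x \in X) by apply/implyP/subsetP.
have outX x : (x \in Z) ==> (x \notin X) by apply/implyP => /(disjointFr dZX) ->.
rewrite !separatesE; move: (inX d.1) (inX d.2) (outX d.1) (outX d.2).
by case: (d.1 \in X); case: (d.2 \in X); case: (d.1 \in Y); case: (d.2 \in Y);
  case: (d.1 \in Z); case: (d.2 \in Z).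
Qed.

Lemma sep_eq0_subset_disjoint (A X : {set V}) :
  A \subset X -> [disjoint A & X] -> sep D A = set0.
Proof.
move=> sAX dAX; suff -> : A = set0 by exact: sep0.
by apply/eqP; rewrite -subset0 -(setICr X) subsetI sAX -disjoints_subset.
Qed.

Definition closed_family (P : {set {set V}}) : Prop :=
  [/\ trivIset P, {in P, forall A : {set V}, sep D A != set0},
      sep D (cover P) = set0 & (#|P| <= 3)%N].

Lemma sep_subset_isolated (P : {set {set V}}) (M X : {set V}) :
  trivIset P -> sep D (cover P) = set0 -> M \in P -> [disjoint M & X] ->
  {in P :\ M, forall N : {set V}, N \subset X} -> sep D M \subset sep D X.
Proof.
move=> tP sP MP dMX sX; apply/subsetP => d; rewrite !inE => /andP[dD sMd].
rewrite dD /=; set W := cover (P :\ M).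
have dMW : [disjoint M & W].
  apply/bigcup_disjoint => N; rewrite !inE => /andP[NM NP].
  by apply: (trivIsetP tP) => //; rewrite eq_sym.
have sWd : separates W d.
  have : d \notin sep D (cover P) by rewrite sP inE.
  by rewrite inE dD /cover (big_setD1 M MP) -/W separatesU // sMd => /negbNE.
by apply: (separates_across _ dMX sWd sMd); apply/bigcupsP.
Qed.

Lemma closed_family_split (P : {set {set V}}) (X A B : {set V}) :
  closed_family P -> {in P, forall C : {set V}, C \subset X \/ [disjoint C & X]} ->
  A \in P -> B \in P -> A \subset X -> [disjoint B & X] -> sep D X != set0.
Proof.
case=> tP nP sP cardP lamP AP BP sAX dBX.
have sep_neq0 Y : Y \in P -> sep D Y \subset sep D X -> sep D X != set0.
  by move=> YP sYX; apply: contraNneq (nP Y YP) => sX0; rewrite -subset0 -sX0.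
(* With at most three members, X contains exactly one of them or avoids exactly one. *)
have [/forall_inP sX | /forall_inPn[C /setD1P[CB CP] nsCX]] :=
  boolP [forall N in P :\ B, N \subset X].
  exact: sep_neq0 BP (sep_subset_isolated tP sP BP dBX sX).
have dCX : [disjoint C & X] by case: (lamP C CP) nsCX => ->.
have inside_neq_outside (Y Z : {set V}) :
    Y \in P -> Y \subset X -> [disjoint Z & X] -> Y != Z.
  move=> YP sYX dZX; apply: contraNneq (nP Y YP) => eYZ.
  by rewrite (sep_eq0_subset_disjoint sYX) // eYZ.
have PE : [:: A; B; C] =i P.
  have sABC : [:: A; B; C] \subset P.
    by apply/subsetP => Y; rewrite !inE => /or3P[]/eqP->.
  have uABC : uniq [:: A; B; C].
    rewrite /= !inE negb_or (inside_neq_outside A B) //.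
    by rewrite (inside_neq_outside A C) // eq_sym CB.
  apply/subset_cardP => //; apply/eqP.
  by rewrite eqn_leq subset_leq_card // (card_uniqP uABC).
have: sep D A \subset sep D (~: X).
  apply: sep_subset_isolated tP sP AP _ _; first by rewrite disjoints_subset setCK.
  move=> N /setD1P[NA]; rewrite -PE !inE (negbTE NA) /= -disjoints_subset.
  by case/orP => /eqP->.
by rewrite sepC; apply: sep_neq0.
Qed.

Lemma pair_closed (A B : {set V}) : [disjoint A & B] ->
  sep D A = sep D B -> sep D A != set0 -> closed_family [set A; B].
Proof.
move=> dAB eAB nA; split.
- apply/trivIsetP => Y Z /set2P[]-> /set2P[]->; rewrite ?eqxx // => _.
  by rewrite disjoint_sym.
- by move=> Y /set2P[]->; rewrite -?eAB.
- apply/setP => d; rewrite /cover bigcup_setU !big_set1 !inE separatesU //.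
  by move: eAB => /setP/(_ d); rewrite !inE; case: (d \in D) => //= ->; rewrite addbb.
- by rewrite cards2; case: (A != B).
Qed.

Lemma triple_closed (A1 A2 A3 : {set V}) :
  [disjoint A1 & A2] -> [disjoint A1 & A3] -> [disjoint A2 & A3] ->
  sep D A1 != set0 -> sep D A2 != set0 -> sep D A3 != set0 ->
  sep D (A1 :|: A2 :|: A3) = set0 -> closed_family [set A1; A2; A3].
Proof.
move=> d12 d13 d23 n1 n2 n3 s123; split.
- apply/trivIsetP => Y Z; rewrite !inE => /orP[/orP[]|]/eqP-> /orP[/orP[]|]/eqP->;
  by rewrite ?eqxx // => _; rewrite disjoint_sym.
- by move=> Y; rewrite !inE => /orP[/orP[]|]/eqP->.
- by rewrite /cover !bigcup_setU !big_set1.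
- apply: leq_trans (leq_card_setU _ _) _.
  by rewrite cards2 cards1; case: (A1 != A2).
Qed.

End Separation.

Section Components.
Variables (V E : finType) (ends : E -> V * V).

Lemma adjF_sym (F : {set E}) : symmetric (adjF ends F).
Proof.
by move=> u w; apply/existsP/existsP => -[e /andP[eF euw]]; exists e; rewrite eF orbC.
Qed.

Lemma connect_adjF_subset (F F' : {set E}) : F \subset F' ->
  subrel (connect (adjF ends F)) (connect (adjF ends F')).
Proof.
move=> sFF'; apply: connect_sub => u w /existsP[e /andP[eF euw]].
by apply/connect1/existsP; exists e; rewrite (subsetP sFF' e eF).
Qed.

Lemma comps_laminar (F F' : {set E}) (A B : {set V}) : F \subset F' ->
  A \in comps ends F -> B \in comps ends F' -> A \subset B \/ [disjoint A & B].
Proof.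
move=> sFF' /imsetP[a _ ->] /imsetP[b _ ->].
have [|] := boolP [disjoint Defs.comp ends F a & Defs.comp ends F' b]; first by right.
rewrite -setI_eq0 => /set0Pn[x]; rewrite !inE => /andP[ax bx]; left.
apply/subsetP => y; rewrite !inE => ay.
apply: connect_trans bx (connect_adjF_subset sFF' _).
by rewrite (sym_connect_sym (adjF_sym F)) in ax; apply: connect_trans ax ay.
Qed.

End Components.

Lemma nondecreasing_upto (d : Order.disp_t) (T : porderType d) (f : nat -> T) (k : nat) :
  (forall i, (i < k)%N -> (f i <= f i.+1)%O) ->
  forall i j, (i <= j <= k)%N -> (f i <= f j)%O.
Proof.
move=> f_step i j /andP[ij jk].
apply: (Order.NatMonotonyTheory.nondecn_inP (D := [pred n | (n <= k)%N])) => //=.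
- by move=> a b _ bk m /andP[_ /ltnW mb]; apply: leq_trans mb bk.
- by move=> a _; apply: f_step.
- exact: leq_trans ij jk.
Qed.

Section Run.
Variables (R : realType) (V E : finType) (ends : E -> V * V) (c : E -> R)
  (D : {set V * V}) (eps : R) (k : nat) (tm : nat -> R)
  (Fs : nat -> {set E}) (As : nat -> {set {set V}}).
Hypothesis run : is_run ends c D eps k tm Fs As.

Lemma run_tm_leS i : (i < k)%N -> tm i <= tm i.+1.
Proof. by case: run => _ _ _ phase _ /phase[/ltW]. Qed.

Lemma run_tm_le i j : (i <= j <= k)%N -> tm i <= tm j.
Proof. exact: nondecreasing_upto run_tm_leS i j. Qed.

Lemma run_yat_le (S : {set V}) i j : (i <= j <= k)%N -> yat tm As i S <= yat tm As j S.
Proof.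
apply: (nondecreasing_upto (f := fun i => yat tm As i S)) => {}i ik.
by rewrite /yat big_ord_recr /= lerDl mulr_ge0 // subr_ge0 run_tm_leS.
Qed.

Lemma run_tight_subset i j : (i <= j <= k)%N -> Fs i \subset Fs j.
Proof.
move=> /andP[ij jk]; case: run => _ tight _ _ _.
rewrite !tight ?(leq_trans ij jk) //.
apply/subsetP => e; rewrite !inE => /le_trans; apply.
apply: ler_sum => S _; apply: ler_wpM2r; first by rewrite ler0n.
by apply: run_yat_le; rewrite ij jk.
Qed.

Lemma run_active_comps i : (i <= k)%N -> As i \subset comps ends (Fs i).
Proof.
move=> ik; case: run => _ _ active _ _.
by rewrite active // /dact; apply/subsetP => C; rewrite !inE => /orP[] /andP[].
Qed.

Lemma active_at_laminar (t t' : R) (A B : {set V}) : t <= t' ->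
  A \in active_at k tm As t -> B \in active_at k tm As t' ->
  A \subset B \/ [disjoint A & B].
Proof.
move=> tt'; rewrite !inE => /existsP[i /andP[/andP[ti _] Ai]].
move=> /existsP[j /andP[/andP[_ tj] Bj]].
have ij : (i <= j)%N.
  rewrite leqNgt; apply: contraTN (le_lt_trans ti (le_lt_trans tt' tj)) => ji.
  by rewrite -leNgt run_tm_le // ji ltnW.
apply: (comps_laminar (run_tight_subset (i := i) (j := j) _)).
- by rewrite ij ltnW.
- exact: subsetP (run_active_comps (ltnW (ltn_ord i))) _ Ai.
- exact: subsetP (run_active_comps (ltnW (ltn_ord j))) _ Bj.
Qed.

Lemma nested_or_disjoint (P Q : {set {set V}}) (tP tQ : R) : tP <= tQ ->
  {in P, forall A : {set V}, A \in active_at k tm As tP} ->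
  {in Q, forall B : {set V}, B \in active_at k tm As tQ} ->
  closed_family D P -> sep D (cover Q) = set0 -> tuple_sub P Q \/ tuple_disj P Q.
Proof.
move=> ttQ actP actQ cP sQ.
have sub_or_disj A : A \in P -> [exists B in Q, A \subset B] || [disjoint A & cover Q].
  move=> AP; case: (boolP [exists B in Q, A \subset B]) => //= /exists_inPn nsub.
  apply/bigcup_disjoint => B BQ.
  have := active_at_laminar ttQ (actP A AP) (actQ B BQ).
  by rewrite (negbTE (nsub B BQ)) => -[].
have [/forall_inP allsub | /forall_inPn[A0 A0P nsub0]] :=
  boolP [forall A in P, [exists B in Q, A \subset B]].
  by left => A /allsub /exists_inP[B]; exists B.
have [/forall_inP alldisj | /forall_inPn[A1 A1P ndisj1]] :=
  boolP [forall A in P, [disjoint A & cover Q]].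
  by right => A B AP BQ; apply: disjointWr (bigcup_sup B BQ) (alldisj A AP).
have := sub_or_disj A1 A1P; rewrite (negbTE ndisj1) orbF => /exists_inP[B1 B1Q sA1B1].
have dA0Q := sub_or_disj A0 A0P; rewrite (negbTE nsub0) /= in dA0Q.
suff: sep D (cover Q) != set0 by rewrite sQ eqxx.
apply: (closed_family_split cP _ A1P A0P _ dA0Q); last first.
  exact: subset_trans sA1B1 (bigcup_sup B1 B1Q).
move=> A AP; case/orP: (sub_or_disj A AP) => [/exists_inP[B BQ sAB] | dAQ]; last by right.
by left; apply: subset_trans sAB (bigcup_sup B BQ).
Qed.

End Run.

Lemma autarkic_closed (R : realType) (V : finType) (D : {set V * V}) (k : nat)
    (tm : nat -> R) (As : nat -> {set {set V}}) (P : {set {set V}}) :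
  autarkic D k tm As P ->
  exists2 t, {in P, forall A : {set V}, A \in active_at k tm As t} & closed_family D P.
Proof.
case=> [[A [B [-> _ dAB [t /andP[tA tB]] [eAB nA]]]] |
        [A1 [A2 [A3 [-> /and3P[d12 d13 d23] [t /and3P[t1 t2 t3]]
                     /and3P[n1 n2 n3] s123]]]]].
- by exists t; [move=> Y /set2P[]-> | exact: pair_closed].
- exists t; last exact: triple_closed.
  by move=> Y /setUP[/set2P[]|/set1P]->.
Qed.

Lemma tuple_disj_sym (V : finType) (P Q : {set {set V}}) :
  tuple_disj P Q -> tuple_disj Q P.
Proof. by move=> dPQ B A BQ AP; rewrite disjoint_sym dPQ. Qed.

Theorem lemma4p10 (R : realType) (V E : finType) (ends : E -> V * V) (c : E -> R)
    (D : {set V * V}) (eps : R)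
    (c_ge0 : forall e, 0 <= c e) (eps_ge0 : 0 <= eps)
    (k : nat) (tm : nat -> R) (Fs : nat -> {set E}) (As : nat -> {set {set V}})
    (run : is_run ends c D eps k tm Fs As)
    (P Q : {set {set V}}) :
  autarkic D k tm As P -> autarkic D k tm As Q ->
  tuple_sub P Q \/ tuple_sub Q P \/ tuple_disj P Q.
Proof.
move=> /autarkic_closed[tP actP cP] /autarkic_closed[tQ actQ cQ].
have [_ _ sP _] := cP; have [_ _ sQ _] := cQ.
have [ttQ | /ltW tQt] := lerP tP tQ.
- by case: (nested_or_disjoint run ttQ actP actQ cP sQ); [left | right; right].
- case: (nested_or_disjoint run tQt actQ actP cQ sP); first by right; left.
  by right; right; apply: tuple_disj_sym.
Qed.
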